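(* Let $m\ge1$ and $0\le r\le m$. Let $\mathcal{G}\subseteq F_{m,r}$ be a linear subspace such that $\pi(\mathcal{G})=\mathcal{G}$ for all $\pi\in Sym(m,r)$. Then $\mathcal{G}=\{0\}$ or $\mathcal{G}=F_{m,r}$.
   Context: $F_{m,r}$ is the $\mathbb{F}_2$-vector space with basis the monomials $x_I=\prod_{i\in I}x_i$, $I\subseteq[m]$, $|I|=r$ (homogeneous degree-$r$ multilinear polynomials over $\mathbb{F}_2$ in $x_1,\dots,x_m$). For $A\in GL_m(\mathbb{F}_2)$ and $b\in\mathbb{F}_2^m$, the map $\pi_{A,b}:F_{m,r}\to F_{m,r}$ sends $P$ to the degree-$r$ homogeneous part of the multilinear reduction (using $x_i^2=x_i$) of $P(Ax+b)$. $Sym(m,r)$ is the set of all such maps $\pi_{A,b}$. *)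

From HB Require Import structures.
From mathcomp Require Import all_boot all_order all_algebra all_fingroup.
Set Implicit Arguments. Unset Strict Implicit. Unset Printing Implicit Defensive.
Import GRing.Theory.
Local Open Scope ring_scope.

(* Multilinear polynomials over F_2 in x_1..x_m: coefficient function on
   monomials x_I, I a subset of 'I_m. *)
Definition mlpoly (m : nat) := {ffun {set 'I_m} -> 'F_2}.

(* product of multilinear polynomials with reduction x_i^2 = x_i :
   x_S * x_T = x_(S :|: T) *)
Definition mlmul m (p q : mlpoly m) : mlpoly m :=
  [ffun U => \sum_(S : {set 'I_m}) \sum_(T : {set 'I_m} | S :|: T == U) p S * q T].

Definition mlone m : mlpoly m := [ffun U => (U == set0)%:R].

Definition linform m (A : 'M['F_2]_m) (b : 'cV['F_2]_m) (i : 'I_m) : mlpoly m :=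
  [ffun U => (U == set0)%:R * b i ord0 + \sum_(j : 'I_m) (U == [set j])%:R * A i j].

(* multilinear reduction of x_I (A x + b) = prod_(i in I) (A x + b)_i *)
Definition monsub m (A : 'M['F_2]_m) (b : 'cV['F_2]_m) (I : {set 'I_m}) : mlpoly m :=
  \big[@mlmul m/mlone m]_(i in I) linform A b i.

(* multilinear reduction of P(A x + b) *)
Definition mlsubst m (A : 'M['F_2]_m) (b : 'cV['F_2]_m) (P : mlpoly m) : mlpoly m :=
  [ffun U => \sum_(I : {set 'I_m}) P I * monsub A b I U].

(* pi_{A,b}: degree-r homogeneous part of the multilinear reduction of P(Ax+b) *)
Definition piAb m (r : nat) (A : 'M['F_2]_m) (b : 'cV['F_2]_m) (P : mlpoly m) : mlpoly m :=
  [ffun U : {set 'I_m} => if #|U| == r then mlsubst A b P U else 0].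

Definition inFmr m r (P : mlpoly m) : bool := [forall U : {set 'I_m}, (#|U| != r) ==> (P U == 0)].

Definition Fmr m r : {set mlpoly m} := [set P | inFmr r P].

(* G is an F_2-linear subspace of F_{m,r} (over F_2 scalars are 0 and 1,
   so this is: contains 0 and closed under addition) *)
Definition subspace_of_Fmr m r (G : {set mlpoly m}) : Prop :=
  [/\ G \subset Fmr m r, 0 \in G & forall P Q, P \in G -> Q \in G -> P + Q \in G].

From mathcomp Require Import all_boot all_order all_algebra all_fingroup.
Set Implicit Arguments. Unset Strict Implicit. Unset Printing Implicit Defensive.
Import GRing.Theory.
Local Open Scope ring_scope.

(* The transvection x_j |-> x_j + x_k sends a homogeneous P of degree r to
   P + T_jk P, where T_jk moves each monomial x_I with j in I, k notin I to
   x_(I - j + k) and kills the other monomials.  Hence an invariant subspace G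
   is closed under every T_jk.  If a nonzero P in G has two monomials x_I0, x_I1
   in its support, then for j in I0 \ I1 and k in I1 \ I0 the polynomial T_jk P
   is nonzero with a strictly smaller support, so G contains a monomial; single
   exchanges then reach every monomial of degree r, and these span F_{m,r}. *)

Lemma F2_addxx (x : 'F_2) : x + x = 0.
Proof. exact: (addrr_pchar2 (pchar_Fp (isT : prime 2))). Qed.

Lemma F2_eq1 (x : 'F_2) : x != 0 -> x = 1.
Proof. by case: x => [[|[|n]]] // Hn _; apply/val_inj. Qed.

Lemma card_eq_exists_setD (T : finType) (A B : {set T}) :
  #|A| = #|B| -> A != B -> exists2 x, x \in A & x \notin B.
Proof.
move=> cardAB; rewrite eqEcard cardAB leqnn andbT => /subsetPn[x xA xB].
by exists x.
Qed.

Section Multilinear.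
Variable m : nat.
Implicit Types (P : mlpoly m) (I S U : {set 'I_m}) (i j k : 'I_m).

Definition mlmono I : mlpoly m := [ffun U => (U == I)%:R].

Definition mlsupp P : {set {set 'I_m}} := [set I | P I != 0].

Lemma in_mlsupp P I : (I \in mlsupp P) = (P I != 0).
Proof. by rewrite inE. Qed.

Lemma mlpoly_addxx P : P + P = 0.
Proof. by apply/ffunP => U; rewrite !ffunE F2_addxx. Qed.

Lemma mlmulDl P Q R : mlmul (P + Q) R = mlmul P R + mlmul Q R.
Proof.
apply/ffunP => U; rewrite !ffunE -big_split; apply: eq_bigr => S _.
by rewrite -big_split; apply: eq_bigr => T _; rewrite ffunE mulrDl.
Qed.

Lemma mlmulDr P Q R : mlmul R (P + Q) = mlmul R P + mlmul R Q.
Proof.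
apply/ffunP => U; rewrite !ffunE -big_split; apply: eq_bigr => S _.
by rewrite -big_split; apply: eq_bigr => T _; rewrite ffunE mulrDr.
Qed.

Lemma mlmul_mono S T : mlmul (mlmono S) (mlmono T) = mlmono (S :|: T).
Proof.
apply/ffunP => U; rewrite !ffunE (bigD1 S) //= [X in _ + X]big1 => [|S' nS]; last first.
  by rewrite big1 // => T' _; rewrite ffunE (negbTE nS) mul0r.
rewrite addr0 big_mkcond (bigD1 T) //= [X in _ + X]big1 => [|T' nT]; last first.
  by rewrite !ffunE (negbTE nT) mulr0; case: ifP.
by rewrite !ffunE !eqxx mul1r addr0 eq_sym; case: ifP.
Qed.

Lemma mlone_mono : mlone m = mlmono set0.
Proof. by apply/ffunP => U; rewrite !ffunE. Qed.

Lemma mlpoly_supp_sum P : P = \sum_(I in mlsupp P) mlmono I.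
Proof.
apply/ffunP => U; rewrite sum_ffunE.
have monoU I : I != U -> mlmono I U = 0 by rewrite ffunE eq_sym => /negbTE->.
case: (boolP (U \in mlsupp P)) => UP.
  rewrite (bigD1 U) //= [X in _ + X]big1 => [|I /andP[_]]; last exact: monoU.
  by rewrite ffunE eqxx addr0; apply: F2_eq1; rewrite -in_mlsupp.
rewrite big1 => [|I IP]; first by move: UP; rewrite in_mlsupp negbK => /eqP.
by apply/monoU; apply: contraNneq UP => <-.
Qed.

Lemma inFmr_card r P I : inFmr r P -> P I != 0 -> #|I| = r.
Proof. by move=> /forallP/(_ I) /implyP homP; apply: contraNeq => /homP ->. Qed.

Definition exch j k S := k |: (S :\ j).

Lemma mem_exch j k S : k \in exch j k S.
Proof. exact: setU11. Qed.

Lemma notin_exch j k S : j != k -> j \notin exch j k S.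
Proof. by move=> jk; rewrite !inE (negbTE jk) eqxx. Qed.

Lemma exchK j k S : j \in S -> k \notin S -> exch k j (exch j k S) = S.
Proof.
move=> jS kS; apply/setP => x; rewrite !inE.
case: (eqVneq x j) => [->|_]; first by rewrite jS; case: eqP.
by case: (eqVneq x k) => [->|]; rewrite ?(negbTE kS).
Qed.

Lemma card_exch j k S : j \in S -> k \notin S -> #|exch j k S| = #|S|.
Proof.
move=> jS kS; rewrite cardsU1 !inE (negbTE kS) andbF.
by rewrite (cardsD1 j S) jS.
Qed.

Lemma exchU1 a j k S : a != j -> exch j k (a |: S) = a |: exch j k S.
Proof.
move=> aj; apply/setP => x; rewrite !inE.
by case: (eqVneq x a) => [->|]; rewrite ?aj ?orbT //= orbCA.
Qed.

Definition transvection j k : 'M['F_2]_m := 1%:M + delta_mx j k.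

Lemma transvection_unit j k : j != k -> transvection j k \in unitmx.
Proof.
move=> jk; suff /mulmx1_unit[] : transvection j k *m transvection j k = 1%:M by [].
rewrite mulmxDl !mulmxDr !mul1mx mulmx1 mul_delta_mx_cond eq_sym (negbTE jk) mulr0n addr0.
rewrite -addrA; suff -> : delta_mx j k + delta_mx j k = 0 :> 'M['F_2]_m by rewrite addr0.
by apply/matrixP => a b; rewrite !mxE F2_addxx.
Qed.

Lemma linform_transvection j k i : linform (transvection j k) 0 i =
  if i == j then mlmono [set j] + mlmono [set k] else mlmono [set i].
Proof.
have sum_unit (a : 'I_m) U :
    \sum_(l : 'I_m) (U == [set l])%:R * (a == l)%:R = (U == [set a])%:R :> 'F_2.
  rewrite (bigD1 a) //= big1 => [|l /negbTE la]; first by rewrite eqxx mulr1 addr0.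
  by rewrite eq_sym in la; rewrite la mulr0.
apply/ffunP => U; rewrite !ffunE mxE mulr0 add0r.
under eq_bigr => l _ do rewrite !mxE mulrDr.
rewrite big_split /= sum_unit.
case: (eqVneq i j) => [->|_]; rewrite !ffunE.
  by under eq_bigr => l _ do rewrite /= [l == k]eq_sym; rewrite sum_unit.
by rewrite big1 ?addr0 // => l _; rewrite mulr0.
Qed.

Definition transvect_mono j k I :=
  if j \in I then mlmono I + mlmono (exch j k I) else mlmono I.

Lemma mlmul_transvect_mono j k a S :
  mlmul (linform (transvection j k) 0 a) (transvect_mono j k S) =
  transvect_mono j k (a |: S).
Proof.
rewrite linform_transvection /transvect_mono in_setU1.
case: (eqVneq a j) => [->|aj] /=; last first.
  case: ifP => _; rewrite ?mlmulDr !mlmul_mono // exchU1 //.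
rewrite mlmulDl; case: ifP => jS; last first.
  by rewrite !mlmul_mono /exch setU1K ?jS.
have jSS : j |: S = S by apply/setUidPr; rewrite sub1set.
rewrite !mlmulDr !mlmul_mono /exch jSS setUCA setD1K // setUA setUid.
by rewrite addrA -(addrA (mlmono S)) mlpoly_addxx addr0.
Qed.

Lemma monsub_transvection j k I :
  monsub (transvection j k) 0 I = transvect_mono j k I.
Proof.
suff seqE s : \big[@mlmul m/mlone m]_(i <- s | i \in I) linform (transvection j k) 0 i =
    transvect_mono j k [set i in I | i \in s].
  by rewrite /monsub seqE; congr transvect_mono; apply/setP => i; rewrite !inE mem_index_enum andbT.
elim: s => [|a s IHs].
  rewrite big_nil mlone_mono /transvect_mono.
  suff -> : [set i in I | i \in [::]] = set0 by rewrite inE.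
  by apply/setP => i; rewrite !inE andbF.
rewrite big_cons; case: ifP => aI; rewrite IHs; last first.
  by congr transvect_mono; apply/setP => i; rewrite !inE; case: eqP => // ->; rewrite aI.
rewrite mlmul_transvect_mono; congr transvect_mono.
by apply/setP => i; rewrite !inE; case: eqP => // ->; rewrite aI.
Qed.

Definition exch_poly j k P : mlpoly m :=
  [ffun U : {set 'I_m} => if (k \in U) && (j \notin U) then P (exch k j U) else 0].

Lemma transvect_monoE j k I U :
  transvect_mono j k I U = (U == I)%:R + (j \in I)%:R * (U == exch j k I)%:R.
Proof.
by rewrite /transvect_mono; case: ifP => _; rewrite !ffunE ?mul1r ?mul0r ?addr0.
Qed.

Lemma transvect_coef r j k P I U : j != k -> inFmr r P -> #|U| = r ->
  P I * ((j \in I)%:R * (U == exch j k I)%:R) =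
  if [&& k \in U, j \notin U & I == exch k j U] then P I else 0.
Proof.
move=> jk homP cardU; case: ifP => [/and3P[kU jU /eqP->]|notI].
  by rewrite exchK // mem_exch eqxx !mulr1.
case: (boolP (j \in I)) => jI; last by rewrite mul0r mulr0.
case: (eqVneq U (exch j k I)) => [UE|]; last by rewrite !mulr0.
rewrite UE mem_exch notin_exch //= in notI.
case: (boolP (k \in I)) => kI; last by rewrite exchK ?eqxx in notI.
(* x_I then maps to x_(I :\ j), of degree r - 1, so P I = 0. *)
have UI : U = I :\ j by rewrite UE; apply/setUidPr; rewrite sub1set !inE eq_sym jk.
suff /eqP-> : P I == 0 by rewrite mul0r.
apply: contraT => /(inFmr_card homP) cardI.
by have := cardsD1 j I; rewrite jI -UI cardI cardU add1n => /n_Sn.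
Qed.

Lemma piAb_transvection r j k P : j != k -> inFmr r P ->
  piAb r (transvection j k) 0 P = P + exch_poly j k P.
Proof.
move=> jk homP; have P0 I : #|I| != r -> P I = 0.
  by move=> cardI; apply/eqP; apply: contraNT cardI => /(inFmr_card homP)->.
apply/ffunP => U; rewrite !ffunE.
case: (eqVneq #|U| r) => [cardU|cardU] /=; last first.
  by rewrite P0 // add0r; case: ifP => // /andP[kU jU]; rewrite P0 // card_exch.
under eq_bigr => I _ do rewrite monsub_transvection transvect_monoE mulrDr.
rewrite big_split /=; congr (_ + _).
  rewrite (bigD1 U) //= eqxx mulr1 big1 ?addr0 // => I /negbTE.
  by rewrite eq_sym => ->; rewrite mulr0.
under eq_bigr => I _ do rewrite (transvect_coef _ jk homP cardU) andbA.
case: ifP => c; last by rewrite big1.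
by rewrite -big_mkcond big_pred1_eq.
Qed.

Lemma exch_poly_neq0 j k P I :
  j \in I -> k \notin I -> P I != 0 -> exch_poly j k P != 0.
Proof.
move=> jI kI PI; have jk : j != k by apply: contraNneq kI => <-.
apply: contra_neq PI => /ffunP/(_ (exch j k I)).
by rewrite !ffunE mem_exch notin_exch // exchK.
Qed.

Lemma card_mlsupp_exch_poly j k P :
  (#|mlsupp (exch_poly j k P)| <= #|[set I in mlsupp P | j \in I]|)%N.
Proof.
have suppE U : U \in mlsupp (exch_poly j k P) ->
    [/\ k \in U, j \notin U & P (exch k j U) != 0].
  by rewrite in_mlsupp ffunE; case: ifP => [/andP[-> ->]|]; rewrite ?eqxx.
rewrite -(card_in_imset (f := exch k j)) ?subset_leq_card //.
  apply/subsetP => _ /imsetP[U /suppE[kU jU PU] ->].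
  by rewrite inE in_mlsupp PU mem_exch.
by move=> U V /suppE[kU jU _] /suppE[kV jV _] UV; rewrite -(exchK kU jU) UV exchK.
Qed.

Lemma exch_poly_mono j k I : j \in I -> k \notin I ->
  exch_poly j k (mlmono I) = mlmono (exch j k I).
Proof.
move=> jI kI; have jk : j != k by apply: contraNneq kI => <-.
apply/ffunP => U; rewrite !ffunE.
case: (eqVneq U (exch j k I)) => [->|UI]; first by rewrite mem_exch notin_exch // exchK ?eqxx.
case: ifP => // /andP[kU jU]; case: eqP => // IU.
by case/eqP: UI; rewrite -IU exchK.
Qed.

End Multilinear.

Section InvariantSubspace.
Variables (m r : nat) (G : {set mlpoly m}).
Hypothesis subG : subspace_of_Fmr r G.
Hypothesis invG : forall (A : 'M['F_2]_m) (b : 'cV['F_2]_m), A \in unitmx ->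
  [set piAb r A b P | P in G] = G.

Lemma homog_of_G P : P \in G -> inFmr r P.
Proof. by case: subG => /subsetP sGF _ _ /sGF; rewrite inE. Qed.

Lemma addG P Q : P \in G -> Q \in G -> P + Q \in G.
Proof. by case: subG => _ _; apply. Qed.

Lemma card_mlmono_in_G (I : {set 'I_m}) : mlmono I \in G -> #|I| = r.
Proof. by move/homog_of_G/inFmr_card; apply; rewrite ffunE eqxx oner_neq0. Qed.

Lemma exch_poly_in_G j k P : j != k -> P \in G -> exch_poly j k P \in G.
Proof.
move=> jk PG; have : piAb r (transvection j k) 0 P \in G.
  by rewrite -(invG 0 (transvection_unit jk)); apply: imset_f.
move/(addG PG); rewrite piAb_transvection ?homog_of_G //.
by rewrite addrA mlpoly_addxx add0r.
Qed.

Lemma exists_mlmono_in_G P : P \in G -> P != 0 -> exists I, mlmono I \in G.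
Proof.
have [n] := ubnP #|mlsupp P|; elim: n P => // n IHn P; rewrite ltnS => suppP PG P0.
have [I0 I0P] : exists I0, I0 \in mlsupp P.
  apply/set0Pn; apply: contra_neq P0 => suppP0.
  by rewrite [LHS]mlpoly_supp_sum suppP0 big_set0.
case: (eqVneq (mlsupp P) [set I0]) => [suppP1|]; first exists I0.
  by rewrite [mlmono I0](_ : _ = P) // [RHS]mlpoly_supp_sum suppP1 big_set1.
rewrite eq_sym => suppP1; have /properP[_ [I1 I1P]] : [set I0] \proper mlsupp P.
  by rewrite properEneq suppP1 sub1set.
rewrite in_set1 => I10.
have cardP I : I \in mlsupp P -> #|I| = r by rewrite in_mlsupp; apply/inFmr_card/homog_of_G.
have [||j jI0 jI1] := @card_eq_exists_setD _ I0 I1; rewrite 1?eq_sym ?cardP //.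
have [||k kI1 kI0] := @card_eq_exists_setD _ I1 I0; rewrite ?cardP //.
have jk : j != k by apply: contraNneq kI0 => <-.
apply: (IHn (exch_poly j k P)); first last.
- by apply: exch_poly_neq0 jI0 kI0 _; rewrite -in_mlsupp.
- exact: exch_poly_in_G.
apply: leq_ltn_trans (card_mlsupp_exch_poly j k P) _; apply: leq_trans suppP.
apply: proper_card; apply/properP; split; first by apply/subsetP => I; rewrite inE => /andP[].
by exists I1; rewrite // inE (negbTE jI1) andbF.
Qed.

Lemma mlmono_in_G (I J : {set 'I_m}) : mlmono I \in G -> #|J| = r -> mlmono J \in G.
Proof.
have [n] := ubnP #|I :\: J|; elim: n I => // n IHn I; rewrite ltnS => IJ IG cardJ.
case: (eqVneq I J) => [<- //|neIJ]; have cardI := card_mlmono_in_G IG.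
have [||j jI jJ] := @card_eq_exists_setD _ I J; rewrite ?cardI ?cardJ //.
have [||k kJ kI] := @card_eq_exists_setD _ J I; rewrite 1?eq_sym ?cardI ?cardJ //.
have jk : j != k by apply: contraNneq jJ => ->.
apply: (IHn (exch j k I)) => //; last first.
  by rewrite -exch_poly_mono //; apply: exch_poly_in_G.
apply: leq_trans IJ; apply: proper_card; apply/properP; split.
  apply/subsetP => x; rewrite !inE => /andP[xJ /orP[/eqP xk|/andP[_ ->]]].
    by rewrite xk kJ in xJ.
  by rewrite xJ.
by exists j; rewrite !inE ?jI ?jJ // (negbTE jk) eqxx.
Qed.

Lemma invariant_subspace_full P : P \in G -> P != 0 -> G = Fmr m r.
Proof.
move=> PG P0; have [I IG] := exists_mlmono_in_G PG P0.
apply/setP => Q; apply/idP/idP => [/homog_of_G|]; rewrite inE // => homQ.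
rewrite [Q]mlpoly_supp_sum; apply: (big_ind (fun Q => Q \in G)) => //.
- by case: subG.
- exact: addG.
move=> J; rewrite in_mlsupp => QJ; apply: (mlmono_in_G IG).
exact: inFmr_card homQ QJ.
Qed.

End InvariantSubspace.

Theorem claim6p5 (m r : nat) (G : {set mlpoly m}) :
  (1 <= m)%N -> (r <= m)%N ->
  subspace_of_Fmr r G ->
  (forall (A : 'M['F_2]_m) (b : 'cV['F_2]_m), A \in unitmx ->
     [set piAb r A b P | P in G] = G) ->
  G = [set (0 : mlpoly m)] \/ G = Fmr m r.
Proof.
move=> _ _ subG invG.
have [[P /andP[PG P0]] | G0] := pickP [pred P | (P \in G) && (P != 0)].
  by right; apply: invariant_subspace_full PG P0.
left; apply/setP => P; rewrite inE; apply/idP/eqP => [PG|->]; last by case: subG.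
by apply/eqP; move: (G0 P); rewrite /= PG => /negbFE.
Qed.
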